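(* Let $F$ be a sensori-computational device and $N\subseteq Y(F)$. If there exists a sensori-computational device that output simulates $F$ modulo the $N$-shrink $\pi_N$ (with $L=\mathcal{L}(F)$, $\Sigma=Y(F)$), then there exists a sensori-computational device that output simulates $F$ modulo the $N$-pump $P_N$ (with $L=\mathcal{L}(F)$, $\Sigma=Y(F)$).
   Context: A sensori-computational device is a 6-tuple $F=(V,V_0,Y,\tau,C,c)$ where $V$ is a non-empty finite set of states, $V_0\subseteq V$ a non-empty set of initial states, $Y=Y(F)$ a finite set of observations, $\tau:V\times V\to\mathcal{P}(Y)$, $C$ a set of outputs, $c:V\to\mathcal{P}(C)\setminus\{\emptyset\}$. A string $y_1\cdots y_n$ reaches $w$ from $v$ if there are states $w_0=v,\dots,w_n=w$ with $y_i\in\tau(w_{i-1},w_i)$; $\mathcal{R}_F(s)$ is the set of states reached by $s$ from some initial state; $\mathcal{L}(F)=\{s\in Y^*:\mathcal{R}_F(s)\ne\emptyset\}$; $\mathcal{C}_F(s)=\bigcup_{v\in\mathcal{R}_F(s)}c(v)$. For a relation $R\subseteq A\times B$ between sets of strings, $F'$ output simulates $F$ modulo $R$ if for every $s\in\mathcal{L}(F)$: (1) some $t\in\mathcal{L}(F')$ has $s\,R\,t$; (2) every $t\in B$ with $s\,R\,t$ satisfies $t\in\mathcal{L}(F')$ and $\mathcal{C}_F(s)\supseteq\mathcal{C}_{F'}(t)$. For a set $\Sigma$, $L\subseteq\Sigma^*$ and $N\subseteq\Sigma$: the $N$-shrink is the function $\pi_N:L\to(\Sigma\setminus N)^*$ deleting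 every occurrence of symbols of $N$ from a string (so $\pi_N(\epsilon)=\epsilon$). The $N$-pump is the relation $P_N\subseteq L\times\Sigma^*$ defined as the smallest relation such that $\epsilon\,P_N\,\epsilon$, $s\,P_N\,s$ for every $s\in L$, and whenever $s\,P_N\,t_1\cdots t_\ell$, then $s\,P_N\,t_1\cdots t_k\,b\,t_{k+1}\cdots t_\ell$ for every $b\in N$ and $k\in\{1,\dots,\ell\}$ (elements of $N$ are inserted anywhere except before the first symbol). *)

From mathcomp Require Import all_boot.
Set Implicit Arguments. Unset Strict Implicit. Unset Printing Implicit Defensive.

(* All devices share an ambient symbol type S (each device's observation set
   Y(F) is a finite list of symbols of S) and an ambient output type O (the
   output set C and the sets c(v) are predicates on O). *)
Section Device.
Variables (S : eqType) (O : Type).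

Record device := Device {
  dV : finType;
  dV0 : {set dV};
  dY : seq S;
  dtau : dV -> dV -> pred S;
  dC : O -> Prop;
  dc : dV -> O -> Prop;
  dV0_nonempty : dV0 != set0;
  dtau_sub : forall v w y, dtau v w y -> y \in dY;
  dc_sub : forall v o, dc v o -> dC o;
  dc_nonempty : forall v, exists o, dc v o
}.

Fixpoint reaches (F : device) (s : seq S) (v w : dV F) : Prop :=
  match s with
  | [::] => v = w
  | y :: s' => exists u : dV F, dtau v u y /\ @reaches F s' u w
  end.

Definition reached (F : device) (s : seq S) (w : dV F) : Prop :=
  exists2 v, v \in dV0 F & reaches s v w.

Definition lang (F : device) (s : seq S) : Prop := exists w : dV F, reached s w.

Definition outs (F : device) (s : seq S) (o : O) : Prop :=
  exists2 w : dV F, reached s w & dc w o.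

Definition output_simulates (F' F : device) (R : seq S -> seq S -> Prop) : Prop :=
  forall s, lang F s ->
    (exists t, R s t /\ lang F' t) /\
    (forall t, R s t -> lang F' t /\ (forall o, outs F' t o -> outs F s o)).

Definition shrink_rel (L : seq S -> Prop) (N : seq S) (s t : seq S) : Prop :=
  L s /\ t = [seq x <- s | x \notin N].

(* N-pump P_N ⊆ L × Σ^* : smallest relation with eps P eps, s P s (s ∈ L),
   and insertion of b ∈ N after position k ∈ {1..ℓ}. *)
Inductive pump (L : seq S -> Prop) (N : seq S) : seq S -> seq S -> Prop :=
  | pump_eps : pump L N [::] [::]
  | pump_refl s : L s -> pump L N s s
  | pump_ins s t1 t2 b : pump L N s (t1 ++ t2) -> b \in N -> 0 < size t1 ->
      pump L N s (t1 ++ b :: t2).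

End Device.

(** From a device F' simulating F modulo the N-shrink, build a device
    that reads a symbol of N as a self-loop at every state and otherwise
    behaves as F'.  A word then reaches exactly the states that its
    N-free part reaches in F'.  Pumping only inserts symbols of N, so every
    pumped word has the same N-free part as the word it comes from, and the
    new device simulates F modulo the N-pump. *)
From mathcomp Require Import all_boot.
Set Implicit Arguments. Unset Strict Implicit. Unset Printing Implicit Defensive.

Section SkipDevice.
Variables (S : eqType) (O : Type) (F : device S O) (N : seq S).

Notation drop_N t := [seq x <- t | x \notin N].

Definition skip_tau (v w : dV F) : pred S :=
  [pred y | if y \in N then v == w else dtau v w y].

Lemma skip_tau_sub v w y : skip_tau v w y -> y \in dY F ++ N.
Proof.
by rewrite /skip_tau /= mem_cat; case: ifP => [_ _|_ /dtau_sub ->]; rewrite ?orbT.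
Qed.

Definition skip_dev : device S O :=
  @Device S O (dV F) (dV0 F) (dY F ++ N) skip_tau (@dC _ _ F) (@dc _ _ F)
    (dV0_nonempty F) skip_tau_sub (@dc_sub _ _ F) (@dc_nonempty _ _ F).

Lemma reaches_skip t (v w : dV F) :
  @reaches S O skip_dev t v w <-> reaches (drop_N t) v w.
Proof.
elim: t v => [|y t IHt] v //=; rewrite /skip_tau /=.
case: (y \in N) => /=.
- split=> [[u [/eqP <-]] /IHt //|/IHt vw]; by exists v; rewrite eqxx.
- by split=> -[u [vu /IHt uw]]; exists u.
Qed.

Lemma reached_skip t (w : dV F) :
  @reached S O skip_dev t w <-> reached (drop_N t) w.
Proof. by split=> -[v v0 /reaches_skip]; exists v. Qed.

Lemma lang_skip t : lang skip_dev t <-> lang F (drop_N t).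
Proof. by split=> -[w /reached_skip]; exists w. Qed.

Lemma outs_skip t o : outs skip_dev t o <-> outs F (drop_N t) o.
Proof. by split=> -[w /reached_skip]; exists w. Qed.

End SkipDevice.

Lemma filter_pump (S : eqType) (L : seq S -> Prop) (N : seq S) s t :
  pump L N s t -> [seq x <- t | x \notin N] = [seq x <- s | x \notin N].
Proof. by elim=> // {}s t1 t2 b _ IH bN _; rewrite -IH !filter_cat /= bN. Qed.

Lemma output_simulates_skip (S : eqType) (O : Type) (F F' : device S O)
    (N : seq S) (R : seq S -> seq S -> Prop) :
  output_simulates F' F (shrink_rel (lang F) N) ->
  (forall s, lang F s -> R s s) ->
  (forall s t, R s t -> [seq x <- t | x \notin N] = [seq x <- s | x \notin N]) ->
  output_simulates (skip_dev F' N) F R.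
Proof.
move=> simF' Rrefl Rdrop s Fs.
have [_ /(_ _ (conj Fs erefl)) [F's outsF's]] := simF' s Fs.
split=> [|t /Rdrop dropt].
- by exists s; split; [exact: Rrefl | apply/lang_skip].
- split=> [|o /outs_skip]; last by rewrite dropt; apply: outsF's.
  by apply/lang_skip; rewrite dropt.
Qed.

Theorem lemma4 (S : eqType) (O : Type) (F : device S O) (N : seq S) :
  {subset N <= dY F} ->
  (exists F' : device S O, output_simulates F' F (shrink_rel (lang F) N)) ->
  exists F' : device S O, output_simulates F' F (pump (lang F) N).
Proof.
move=> _ [F' simF']; exists (skip_dev F' N).
apply: output_simulates_skip simF' _ _ => [s|s t]; first exact: pump_refl.
exact: filter_pump.
Qed.
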